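(* Let $R$ be a finite Frobenius ring, $M$ a finite $R$-bimodule, and $B$ a non-degenerate bilinear form on $M$. Then $$\mathrm{BLF}(M)=\{B\cdot\gamma:\gamma\in\operatorname{Aut}({}_RM)\}=\{B\cdot\eta:\eta\in\operatorname{Aut}(M_R)\}.$$
   Context: A bilinear form on $M$ is a map $B:M\times M\to R$ that is biadditive with $B(rx,y)=rB(x,y)$ and $B(x,yr)=B(x,y)r$ for $r\in R$, $x,y\in M$. It is non-degenerate if $B(x,y)=0$ for all $y$ implies $x=0$, and $B(x,y)=0$ for all $x$ implies $y=0$. $\mathrm{BLF}(M)$ is the set of non-degenerate bilinear forms on $M$. $\operatorname{Aut}({}_RM)$ (resp. $\operatorname{Aut}(M_R)$) is the group of left (resp. right) $R$-module automorphisms of $M$. For $\gamma\in\operatorname{Aut}({}_RM)$, $(B\cdot\gamma)(x,y)=B(\gamma(x),y)$; for $\eta\in\operatorname{Aut}(M_R)$, $(B\cdot\eta)(x,y)=B(x,\eta(y))$. *)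

From HB Require Import structures.
From mathcomp Require Import all_boot all_order all_algebra all_field.
Set Implicit Arguments. Unset Strict Implicit. Unset Printing Implicit Defensive.
Import Order.TTheory GRing.Theory Num.Theory.
Local Open Scope ring_scope.

Definition additive_character (R : finNzRingType) (chi : R -> algC) : Prop :=
  chi 0 = 1 /\ forall x y : R, chi (x + y) = chi x * chi y.

Definition is_left_ideal (R : finNzRingType) (I : {set R}) : Prop :=
  0 \in I /\ (forall x y, x \in I -> y \in I -> x + y \in I) /\
  (forall r x, x \in I -> r * x \in I).

Definition left_generating (R : finNzRingType) (chi : R -> algC) : Prop :=
  forall I : {set R}, is_left_ideal I ->
    (forall x, x \in I -> chi x = 1) -> I = [set 0].

(* A finite ring is Frobenius iff it admits a (left) generating character
   (Wood's characterization, standard definition for finite rings). *)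
Definition frobenius_ring (R : finNzRingType) : Prop :=
  exists chi : R -> algC, additive_character chi /\ left_generating chi.

Record bimodule (R : finNzRingType) (M : zmodType) := Bimodule {
  lact : R -> M -> M;
  ract : M -> R -> M;
  lactDr : forall r x y, lact r (x + y) = lact r x + lact r y;
  lactDl : forall r s x, lact (r + s) x = lact r x + lact s x;
  lactA  : forall r s x, lact (r * s) x = lact r (lact s x);
  lact1  : forall x, lact 1 x = x;
  ractDl : forall x y r, ract (x + y) r = ract x r + ract y r;
  ractDr : forall x r s, ract x (r + s) = ract x r + ract x s;
  ractA  : forall x r s, ract x (r * s) = ract (ract x r) s;
  ract1  : forall x, ract x 1 = x;
  lractA : forall r x s, ract (lact r x) s = lact r (ract x s)
}.

Section BLF.
Variables (R : finNzRingType) (M : finZmodType) (bm : bimodule R M).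

Definition bilinear_form (B : M -> M -> R) : Prop :=
  (forall x y z, B (x + y) z = B x z + B y z) /\
  (forall x y z, B x (y + z) = B x y + B x z) /\
  (forall r x y, B (lact bm r x) y = r * B x y) /\
  (forall r x y, B x (ract bm y r) = B x y * r).

Definition nondegenerate (B : M -> M -> R) : Prop :=
  (forall x, (forall y, B x y = 0) -> x = 0) /\
  (forall y, (forall x, B x y = 0) -> y = 0).

Definition BLF (B : M -> M -> R) : Prop := bilinear_form B /\ nondegenerate B.

Definition left_aut (g : M -> M) : Prop :=
  bijective g /\ (forall x y, g (x + y) = g x + g y) /\
  (forall r x, g (lact bm r x) = lact bm r (g x)).

Definition right_aut (h : M -> M) : Prop :=
  bijective h /\ (forall x y, h (x + y) = h x + h y) /\
  (forall x r, h (ract bm x r) = ract bm (h x) r).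

Definition act_left (B : M -> M -> R) (g : M -> M) : M -> M -> R :=
  fun x y => B (g x) y.
Definition act_right (B : M -> M -> R) (h : M -> M) : M -> M -> R :=
  fun x y => B x (h y).

End BLF.

(* A generating character chi of R sees R-linear forms f : M -> R injectively
   through the characters chi \o f of the additive group of M: the values of
   the difference of two forms with the same character make up a one-sided
   ideal inside the kernel of chi.  For non-degenerate B the |M| characters
   chi \o B(-, y) are therefore pairwise distinct, and since a finite abelian
   group has at most |M| characters (orthogonality of the character table)
   they are all of them.  So every left-linear form is some B(-, y), which
   gives B'(x, y) = B(x, eta y), and non-degeneracy makes eta an automorphism
   of M_R.  The other side is symmetric, once one knows that a left
   generating character is also right generating. *)

From Pilot Require Import Defs.
From HB Require Import structures.
From mathcomp Require Import all_boot all_order all_algebra all_field.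
From Stdlib Require Import FunctionalExtensionality.
Set Implicit Arguments. Unset Strict Implicit. Unset Printing Implicit Defensive.
Import GRing.Theory Num.Theory.
Local Open Scope ring_scope.

(* The bare name would now refer to MathComp's notion for hermitian forms. *)
Local Notation nondegenerate := Defs.nondegenerate.

Section Characters.
Variable G : finZmodType.

Definition zchar (a : G -> algC) : Prop :=
  a 0 = 1 /\ {morph a : x y / x + y >-> x * y}.

Lemma zcharN a : zchar a -> forall x, a x * a (- x) = 1.
Proof. by move=> [a0 aD] x; rewrite -aD subrr. Qed.

Lemma zchar_mulN a b : zchar a -> zchar b -> zchar (fun x => a x * b (- x)).
Proof.
move=> [a0 aD] [b0 bD]; split=> [|x y]; first by rewrite oppr0 a0 b0 mulr1.
by rewrite aD opprD bD mulrACA.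
Qed.

Lemma zchar_sum_eq0 a z : zchar a -> a z != 1 -> \sum_x a x = 0.
Proof.
move=> [_ aD] az_neq1.
have sum_shift : \sum_x a x = a z * \sum_x a x.
  rewrite [LHS](reindex_inj (addrI z)) mulr_sumr.
  by apply: eq_bigr => x _; rewrite aD.
have : (1 - a z) * \sum_x a x == 0 by rewrite mulrBl mul1r -sum_shift subrr.
by rewrite mulf_eq0 subr_eq0 eq_sym (negbTE az_neq1) => /eqP.
Qed.

Lemma zcharB_eq1 a x y : zchar a -> a x = a y -> a (x - y) = 1.
Proof. by move=> [a0 aD] axy; rewrite aD axy -aD subrr. Qed.

Lemma zchar_orthogonal a b z :
  zchar a -> zchar b -> a z != b z -> \sum_x a x * b (- x) = 0.
Proof.
move=> a_char b_char abz; apply: (zchar_sum_eq0 (z := z) (zchar_mulN a_char b_char)).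
apply: contra abz => /eqP abz1; apply/eqP.
by rewrite -[a z]mulr1 -(zcharN b_char z) mulrCA abz1 mulr1.
Qed.

Lemma zchar_norm a : zchar a -> \sum_x a x * a (- x) = #|G|%:R.
Proof.
move=> a_char; rewrite (eq_bigr (fun=> 1)) ?sumr_const // => x _.
exact: zcharN.
Qed.

Lemma natr_card_neq0 : (#|G|%:R : algC) != 0.
Proof. by rewrite pnatr_eq0 -lt0n; apply/card_gt0P; exists 0. Qed.

Section CharacterTable.
Variables (T : finType) (a : T -> G -> algC).
Hypotheses (a_char : forall t, zchar (a t))
           (a_inj : forall s t, a s =1 a t -> s = t).

Definition char_mx : 'M[algC]_(#|T|, #|G|) :=
  \matrix_(i, j) a (enum_val i) (enum_val j).
Definition char_mxN : 'M[algC]_(#|T|, #|G|) :=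
  \matrix_(i, j) a (enum_val i) (- enum_val j).

Lemma char_mx_orthogonal : char_mx *m char_mxN^T = #|G|%:R%:M.
Proof.
apply/matrixP => i i'; rewrite !mxE.
under eq_bigr => j _ do rewrite !mxE.
rewrite -(big_enum_val (fun x => a (enum_val i) x * a (enum_val i') (- x))) /=.
have [<-|neq_ii'] := eqVneq i i'; first by rewrite zchar_norm.
have [z] : exists z, a (enum_val i) z != a (enum_val i') z.
  apply/existsP; rewrite -negb_forall; apply: contra neq_ii' => /forallP eq_a.
  by apply/eqP/enum_val_inj/a_inj => x; apply/eqP.
exact: zchar_orthogonal.
Qed.

Lemma card_zchar_family : (#|T| <= #|G|)%N.
Proof.
have := mxrankM_maxl char_mx char_mxN^T.
rewrite char_mx_orthogonal -scalemx1 mxrank_scale_nz ?natr_card_neq0 // mxrank1.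
by move=> /leq_trans; apply; apply: rank_leq_col.
Qed.

End CharacterTable.

Lemma zchar_family_complete (T : finType) (a : T -> G -> algC) b :
  (forall t, zchar (a t)) -> (forall s t, a s =1 a t -> s = t) -> zchar b ->
  (#|G| <= #|T|)%N -> exists t, a t =1 b.
Proof.
move=> a_char a_inj b_char le_GT.
have [/existsP[t /forallP eq_ab] | /existsPn neq_ab] :=
  boolP [exists t, [forall x, a t x == b x]].
  by exists t => x; apply/eqP.
pose c (o : option T) := if o is Some t then a t else b.
have c_char o : zchar (c o) by case: o.
have c_inj o o' : c o =1 c o' -> o = o'.
  case: o o' => [s|] [t|] //= eq_c; first by rewrite (a_inj s t).
    by case/negP: (neq_ab s); apply/forallP => x; rewrite eq_c.
  by case/negP: (neq_ab t); apply/forallP => x; rewrite eq_c.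
by have := card_zchar_family c_char c_inj; rewrite card_option ltnNge le_GT.
Qed.

(* Column orthogonality: a square character table is invertible. *)
Lemma zchar_family_separates (a : G -> G -> algC) g :
  (forall t, zchar (a t)) -> (forall s t, a s =1 a t -> s = t) ->
  (forall t, a t g = 1) -> g = 0.
Proof.
move=> a_char a_inj ag1.
have inv_mx : char_mx a *m ((#|G|%:R)^-1 *: (char_mxN a)^T) = 1%:M.
  by rewrite -scalemxAr char_mx_orthogonal // scale_scalar_mx mulVf ?natr_card_neq0.
have /matrixP/(_ (enum_rank g) (enum_rank 0)) := mulmx1C inv_mx.
rewrite !mxE (eq_bigr (fun=> (#|G|%:R)^-1)) => [|t _]; last first.
  have agN1 : a (enum_val t) (- g) = 1.
    by rewrite -(zcharN (a_char (enum_val t)) g) ag1 mul1r.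
  by rewrite !mxE !enum_rankK agN1 (proj1 (a_char _)) !mulr1.
rewrite sumr_const card_ord -(mulr_natr (#|G|%:R)^-1) mulVf ?natr_card_neq0 //.
by case: eqP => [/enum_rank_inj // | _ /eqP]; rewrite oner_eq0.
Qed.

End Characters.

Lemma addmorph0 (U V : zmodType) (f : U -> V) : {morph f : x y / x + y} -> f 0 = 0.
Proof. by move=> fD; apply: (addrI (f 0)); rewrite -fD !addr0. Qed.

Lemma addmorphB (U V : zmodType) (f : U -> V) :
  {morph f : x y / x + y} -> {morph f : x y / x - y}.
Proof.
move=> fD x y; rewrite fD; congr (_ + _).
by apply: (addrI (f y)); rewrite -fD !subrr addmorph0.
Qed.

Section GeneratingCharacter.
Variables (R : finNzRingType) (chi : R -> algC).

(* [mul] is [*%R] for left ideals and [fun r x => x * r] for right ideals. *)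
Definition one_sided_ideal (mul : R -> R -> R) (I : {set R}) : Prop :=
  0 \in I /\ (forall x y, x \in I -> y \in I -> x + y \in I) /\
  (forall r x, x \in I -> mul r x \in I).

Definition generating (mul : R -> R -> R) : Prop :=
  forall I : {set R}, one_sided_ideal mul I ->
    (forall x, x \in I -> chi x = 1) -> I = [set 0].

Definition act_linear (M : finZmodType) (act : R -> M -> M) (mul : R -> R -> R)
    (f : M -> R) : Prop :=
  {morph f : x y / x + y} /\ forall r x, f (act r x) = mul r (f x).

Lemma generating_linear_eq0 (M : finZmodType) act mul (f : M -> R) :
  generating mul -> act_linear act mul f -> (forall x, chi (f x) = 1) ->
  forall x, f x = 0.
Proof.
move=> chi_gen [fD f_act] f_ker x.
have I0 : [set f x | x : M] = [set 0].
  apply: chi_gen => [|_ /imsetP[y _ ->] //]; split; last split.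
  - by apply/imsetP; exists 0; rewrite ?(addmorph0 fD).
  - by move=> _ _ /imsetP[y _ ->] /imsetP[z _ ->]; rewrite -fD imset_f.
  - by move=> r _ /imsetP[y _ ->]; rewrite -f_act imset_f.
by apply/set1P; rewrite -I0 imset_f.
Qed.

Lemma generating_linear_inj (M : finZmodType) act mul (f g : M -> R) :
  zchar chi -> generating mul -> (forall r, {morph mul r : x y / x - y}) ->
  act_linear act mul f -> act_linear act mul g ->
  (forall x, chi (f x) = chi (g x)) -> f =1 g.
Proof.
move=> chi_char chi_gen mulB [fD f_act] [gD g_act] chi_fg x.
apply/eqP; rewrite -subr_eq0; apply/eqP; move: x.
apply: (generating_linear_eq0 (act := act) chi_gen) => [|x]; last first.
  exact: zcharB_eq1.
split=> [x y | r x]; first by rewrite fD gD opprD addrACA.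
by rewrite f_act g_act mulB.
Qed.

Lemma generating_mull : left_generating chi -> generating *%R.
Proof. by []. Qed.

(* The characters x |-> chi (x * s) are pairwise distinct because chi is left
   generating, so they form a complete character table, which separates the
   points of a right ideal on which all of them are trivial. *)
Lemma generating_mulr :
  zchar chi -> left_generating chi -> generating (fun r x => x * r).
Proof.
move=> chi_char chi_gen I [I0 [_ IM]] I_ker.
pose a s x := chi (x * s).
have a_char s : zchar (a s).
  by case: chi_char => chi0 chiD; split=> [|x y]; rewrite /a ?mul0r ?mulrDl.
have a_inj s t : a s =1 a t -> s = t.
  move=> eq_a; apply/eqP; rewrite -subr_eq0 -[s - t]mul1r; apply/eqP.
  apply: (generating_linear_eq0 (f := fun x => x * (s - t)) (act := *%R)
           (generating_mull chi_gen)) => [|x].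
    by split=> [x y | r x]; rewrite ?mulrDl ?mulrA.
  by rewrite mulrBr; exact: zcharB_eq1 chi_char (eq_a x).
apply/setP => g; rewrite inE; apply/idP/eqP => [gI | ->] //.
by apply: (zchar_family_separates a_char a_inj) => s; apply: I_ker; apply: IM.
Qed.

End GeneratingCharacter.

Lemma nondegenerate_inj2 (R : finNzRingType) (M : finZmodType) (B : M -> M -> R) y z :
  (forall x, {morph B x : u v / u + v}) -> nondegenerate B ->
  (forall x, B x y = B x z) -> y = z.
Proof.
move=> BD [_ nd2] eqB; apply/eqP; rewrite -subr_eq0; apply/eqP.
by apply: nd2 => x; rewrite (addmorphB (BD x)) eqB subrr.
Qed.

Section BilinearForms.
Variables (R : finNzRingType) (M : finZmodType).
Variables (act1 act2 : R -> M -> M) (mul1 mul2 : R -> R -> R).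

Definition act_bilinear (B : M -> M -> R) : Prop :=
  (forall y, act_linear act1 mul1 (B^~ y)) /\ (forall x, act_linear act2 mul2 (B x)).

Definition act_aut (h : M -> M) : Prop :=
  bijective h /\ {morph h : x y / x + y} /\ (forall r x, h (act2 r x) = act2 r (h x)).

Lemma act_bilinear_aut B h : act_bilinear B -> nondegenerate B -> act_aut h ->
  act_bilinear (fun x y => B x (h y)) /\ nondegenerate (fun x y => B x (h y)).
Proof.
move=> [B_lin1 B_lin2] [nd1 nd2] [[hinv hK hinvK] [hD h_act]].
split; split.
- by move=> y; apply: B_lin1.
- move=> x; have [BD B_act] := B_lin2 x.
  by split=> [y z | r y]; rewrite ?hD ?BD ?h_act ?B_act.
- by move=> x Bh0; apply: nd1 => y; rewrite -(hinvK y).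
- move=> y Bh0; have hy0 : h y = 0 by apply: nd2.
  by rewrite -(hK y) hy0 -{1}(addmorph0 hD) hK.
Qed.

Variable chi : R -> algC.
Hypotheses (chi_char : zchar chi) (chi_gen : generating chi mul1)
           (mul1B : forall r, {morph mul1 r : x y / x - y}).

Lemma act_bilinear_represent B f : act_bilinear B -> nondegenerate B ->
  act_linear act1 mul1 f -> exists y, f =1 B^~ y.
Proof.
move=> [B_lin1 B_lin2] ndB f_lin.
have chi_lin g : act_linear act1 mul1 g -> zchar (fun x => chi (g x)).
  case: chi_char => chi0 chiD [gD _].
  by split=> [|x y]; rewrite ?(addmorph0 gD) ?gD ?chiD.
pose a y x := chi (B x y).
have a_inj y z : a y =1 a z -> y = z.
  move=> eq_a; apply: (nondegenerate_inj2 (fun x => (B_lin2 x).1) ndB).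
  exact: generating_linear_inj chi_char chi_gen mul1B (B_lin1 y) (B_lin1 z) eq_a.
have [y eq_ay] := zchar_family_complete (fun y => chi_lin _ (B_lin1 y)) a_inj
                    (chi_lin f f_lin) (leqnn _).
exists y; apply: generating_linear_inj chi_char chi_gen mul1B f_lin (B_lin1 y) _.
by move=> x; rewrite -eq_ay.
Qed.

Lemma act_bilinear_factor B B' : act_bilinear B -> nondegenerate B ->
  act_bilinear B' -> nondegenerate B' ->
  exists h, act_aut h /\ B' = fun x y => B x (h y).
Proof.
move=> [B_lin1 B_lin2] ndB [B'_lin1 B'_lin2] ndB'.
have /fin_all_exists[h Bh] : forall y, exists z, forall x, B' x y = B x z.
  by move=> y; apply: act_bilinear_represent (B'_lin1 y).
have B_inj2 := nondegenerate_inj2 (fun x => (B_lin2 x).1) ndB.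
exists h; split; last first.
  by apply: functional_extensionality => x; apply: functional_extensionality.
split; [|split].
- apply: injF_bij => y z eq_h.
  by apply: (nondegenerate_inj2 (fun x => (B'_lin2 x).1) ndB') => x; rewrite !Bh eq_h.
- move=> y z; apply: B_inj2 => x.
  have [BD _] := B_lin2 x; have [B'D _] := B'_lin2 x.
  by rewrite -Bh B'D BD !Bh.
- move=> r y; apply: B_inj2 => x.
  have [_ B_act] := B_lin2 x; have [_ B'_act] := B'_lin2 x.
  by rewrite -Bh B'_act B_act Bh.
Qed.

Lemma act_bilinear_orbit B B' : act_bilinear B -> nondegenerate B ->
  act_bilinear B' /\ nondegenerate B' <->
  exists h, act_aut h /\ B' = fun x y => B x (h y).
Proof.
move=> B_bil ndB; split=> [[] | [h [h_aut ->]]]; first exact: act_bilinear_factor.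
exact: act_bilinear_aut.
Qed.

End BilinearForms.

Section Bimodule.
Variables (R : finNzRingType) (M : finZmodType) (bm : bimodule R M).

Definition form_tr (B : M -> M -> R) : M -> M -> R := fun x y => B y x.

Lemma form_trK : involutive form_tr.
Proof. by []. Qed.

Lemma BLF_act_bilinear B : BLF bm B <->
  act_bilinear (lact bm) (fun r y => ract bm y r) *%R (fun r s => s * r) B /\
  nondegenerate B.
Proof.
split=> [[[BD1 [BD2 [B_lact B_ract]]] ndB] | [[B_lin1 B_lin2] ndB]].
  split=> //; split=> [y | x]; split=> [u v | r u] /=.
  - exact: BD1.
  - exact: B_lact.
  - exact: BD2.
  - exact: B_ract.
split=> //; split; [|split; [|split]].
- by move=> x y z; apply: (B_lin1 z).1.
- by move=> x y z; apply: (B_lin2 x).1.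
- by move=> r x y; apply: (B_lin1 y).2.
- by move=> r x y; apply: (B_lin2 x).2.
Qed.

Lemma BLF_tr_act_bilinear B : BLF bm B <->
  act_bilinear (fun r y => ract bm y r) (lact bm) (fun r s => s * r) *%R (form_tr B) /\
  nondegenerate (form_tr B).
Proof.
split=> [/BLF_act_bilinear[[B_lin1 B_lin2] [nd1 nd2]] | [[B_lin1 B_lin2] [nd1 nd2]]].
  by split; split.
by apply/BLF_act_bilinear; split; split.
Qed.

Lemma right_autE h : right_aut bm h <-> act_aut (fun r y => ract bm y r) h.
Proof. by split=> -[h_bij [hD h_act]]; do !split=> // *; apply: h_act. Qed.

End Bimodule.

Theorem theoremA1 (R : finNzRingType) (M : finZmodType) (bm : bimodule R M)
  (B : M -> M -> R) :
  frobenius_ring R -> BLF bm B ->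
  (forall B' : M -> M -> R,
     BLF bm B' <-> exists g : M -> M, left_aut bm g /\ B' = act_left B g) /\
  (forall B' : M -> M -> R,
     BLF bm B' <-> exists h : M -> M, right_aut bm h /\ B' = act_right B h).
Proof.
move=> [chi [chi_char chi_gen]] BLF_B; split=> B'.
- have /BLF_tr_act_bilinear[B_bil ndB] := BLF_B.
  have orbit := act_bilinear_orbit chi_char (generating_mulr chi_char chi_gen)
                  (@mulrBl R) (form_tr B') B_bil ndB.
  split=> [/BLF_tr_act_bilinear/orbit [g [g_aut eqB]] | [g [g_aut eqB]]].
    by exists g; split=> //; rewrite -[B']form_trK eqB.
  by apply/BLF_tr_act_bilinear/orbit; exists g; rewrite eqB.
- have /BLF_act_bilinear[B_bil ndB] := BLF_B.
  have orbit := act_bilinear_orbit chi_char (generating_mull chi_gen)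
                  (@mulrBr R) B' B_bil ndB.
  split=> [/BLF_act_bilinear/orbit [h [/right_autE h_aut eqB]] |
           [h [/right_autE h_aut eqB]]].
    by exists h.
  by apply/BLF_act_bilinear/orbit; exists h.
Qed.
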